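(* Let $m\geq 2$ and let $\lambda:\mathbb{R}^{2m}\to\mathbb{R}$ be a function satisfying $\lambda(\alpha\zeta)=\alpha\lambda(\zeta)$ for all $\alpha\in\mathbb{R}$, $\zeta\in\mathbb{R}^{2m}$, and $\lambda(\zeta_1+\zeta_2)=\lambda(\zeta_1)+\lambda(\zeta_2)$ for all $\zeta_1,\zeta_2\in\mathbb{R}^{2m}$ with $[\zeta_1,\zeta_2]=0$. Then $\lambda$ is a linear functional.
   Context: For $u,v\in\mathbb{R}^{2m}$, $[u,v]:=u^T\omega v$ where $\omega=\begin{pmatrix}0&-\mathbb{1}_m\\ \mathbb{1}_m&0\end{pmatrix}$ is the standard symplectic form. *)

From mathcomp Require Import all_boot all_order all_algebra.
From mathcomp Require Import Rstruct.
Notation R := Rdefinitions.R.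
Set Implicit Arguments. Unset Strict Implicit. Unset Printing Implicit Defensive.
Import GRing.Theory Num.Theory.
Local Open Scope ring_scope.

Definition omega (m : nat) : 'M[R]_(m + m) :=
  block_mx 0 (- 1%:M) 1%:M 0.

Definition symp (m : nat) (u v : 'cV[R]_(m + m)) : R :=
  (u^T *m omega m *m v) ord0 ord0.

From HB Require Import structures.
From mathcomp Require Import all_boot all_order all_algebra.
From mathcomp Require Import Rstruct.
From mathcomp Require Import ring.
Set Implicit Arguments. Unset Strict Implicit. Unset Printing Implicit Defensive.
Import GRing.Theory Num.Theory.
Local Open Scope ring_scope.

(* Apply the additivity hypothesis to x + y only after padding it with a pair
   (e, f) orthogonal to x and y with [e, f] = -[x, y]: then (+-x + e) and
   (+-y + f) are orthogonal, as are +-(x + y) and e + f, so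
   lam(+-(x + y)) + lam(e + f) = lam(+-x) + lam e + lam(+-y) + lam f for both
   signs, and subtracting gives lam(x + y) = lam x + lam y. In the standard
   symplectic basis (e_i, f_i) another plane j <> i provides such a pair, so lam
   is linear on each hyperbolic plane span(e_i, f_i); these planes are pairwise
   orthogonal and span R^(2m), so lam is additive across them as well. *)

Section OrthogonallyAdditive.
Variables (F : numFieldType) (V : lmodType F).
Variable form : {biscalar V}.
Variable lam : V -> F.
Hypothesis lamZ : forall (a : F) (z : V), lam (a *: z) = a * lam z.
Hypothesis lamD_orth : forall u v : V, form u v = 0 -> lam (u + v) = lam u + lam v.

Lemma lam0 : lam 0 = 0.
Proof. by rewrite -(scale0r 0) lamZ mul0r. Qed.

Lemma lamD_compensated x y e f :
    form x e = 0 -> form x f = 0 -> form e y = 0 -> form y e = 0 ->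
    form y f = 0 -> form x y + form e f = 0 ->
  lam (x + y) = lam x + lam y.
Proof.
move=> xe xf ey ye yf xy_ef.
have split_at s : s ^+ 2 = 1 ->
    s * lam (x + y) + lam (e + f) = s * (lam x + lam y) + lam e + lam f.
  move=> s2.
  have orth_xy : form (s *: x + e) (s *: y + f) = 0.
    rewrite !(linearDl, linearDr, linearZl_LR, linearZr_LR) /= xf ey.
    by rewrite mulrA -expr2 s2 mul1r mulr0 !addr0 add0r.
  have orth_ef : form (s *: (x + y)) (e + f) = 0.
    by rewrite !(linearDl, linearDr, linearZl_LR) /= xe xf ye yf !addr0 mulr0 addr0.
  have orth_x : form (s *: x) e = 0 by rewrite linearZl_LR /= xe mulr0.
  have orth_y : form (s *: y) f = 0 by rewrite linearZl_LR /= yf mulr0.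
  rewrite -[LHS](_ : lam ((s *: x + e) + (s *: y + f)) = _); last first.
    by rewrite addrACA -scalerDr lamD_orth // lamZ.
  by rewrite !lamD_orth // !lamZ; ring.
have plus := split_at 1 (expr1n _ _).
have minus := split_at (-1) (etrans (sqrrN 1) (expr1n _ 2)).
suff /eqP : (lam (x + y) - (lam x + lam y)) *+ 2 = 0.
  by rewrite mulrn_eq0 subr_eq0 => /eqP.
transitivity ((1 * lam (x + y) + lam (e + f)) - (-1 * lam (x + y) + lam (e + f))
  - ((1 * (lam x + lam y) + lam e + lam f) - (-1 * (lam x + lam y) + lam e + lam f))).
  by ring.
by rewrite plus minus subrr.
Qed.

Lemma lam_sum_orth (I : finType) (v : I -> V) :
    (forall i j, i != j -> form (v i) (v j) = 0) ->
  lam (\sum_i v i) = \sum_i lam (v i).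
Proof.
move=> orth; move: (index_enum_uniq I); elim: (index_enum I) => [|i r IH].
  by rewrite !big_nil lam0.
rewrite cons_uniq => /andP[ir uniq_r]; rewrite !big_cons lamD_orth ?IH //.
rewrite linear_sumr big_seq big1 // => j jr; apply: orth.
by apply: contraNneq ir => ->.
Qed.

End OrthogonallyAdditive.

Lemma exists_ord_neq n (i : 'I_n) : (1 < n)%N -> exists j : 'I_n, j != i.
Proof.
move=> n_gt1; have /card_gt0P[j] : (0 < #|predC1 i|)%N by rewrite cardC1 card_ord -subn1 subn_gt0.
by exists j.
Qed.

Section StandardSymplecticForm.
Variable m : nat.
Local Notation V := 'cV[R]_(m + m).

Lemma symp_is_bilinear :
  bilinear_for (GRing.Scale.Law.clone _ _ *%R _) (GRing.Scale.Law.clone _ _ *%R _)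
    (@symp m).
Proof.
split=> [u|u] a x y; rewrite /symp.
- by rewrite linearP /= !mulmxDl -!scalemxAl !mxE.
- by rewrite !mulmxDr -!scalemxAr !mxE.
Qed.

HB.instance Definition _ :=
  bilinear_isBilinear.Build R V V R _ _ (@symp m) symp_is_bilinear.

Definition ebasis (i : 'I_m) : V := delta_mx (lshift m i) 0.
Definition fbasis (i : 'I_m) : V := delta_mx (rshift m i) 0.

Lemma symp_delta k l : symp (delta_mx k 0 : V) (delta_mx l 0) = omega m k l.
Proof. by rewrite /symp trmx_delta -rowE -colE !mxE. Qed.

Lemma symp_ee i j : symp (ebasis i) (ebasis j) = 0.
Proof. by rewrite symp_delta /omega block_mxEul mxE. Qed.

Lemma symp_ff i j : symp (fbasis i) (fbasis j) = 0.
Proof. by rewrite symp_delta /omega block_mxEdr mxE. Qed.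

Lemma symp_ef i j : symp (ebasis i) (fbasis j) = - (i == j)%:R.
Proof. by rewrite symp_delta /omega block_mxEur !mxE. Qed.

Lemma symp_fe i j : symp (fbasis i) (ebasis j) = (i == j)%:R.
Proof. by rewrite symp_delta /omega block_mxEdl !mxE. Qed.

Definition hyperbolic_part (i : 'I_m) (z : V) : V :=
  z (lshift m i) 0 *: ebasis i + z (rshift m i) 0 *: fbasis i.

Lemma sum_hyperbolic_part z : \sum_i hyperbolic_part i z = z.
Proof.
rewrite [RHS]matrix_sum_delta big_split_ord big_split /=.
by congr (_ + _); apply: eq_bigr => i _; rewrite big_ord1.
Qed.

Lemma symp_hyperbolic_part i j z w :
  i != j -> symp (hyperbolic_part i z) (hyperbolic_part j w) = 0.
Proof.
move/negbTE=> ij; rewrite !(linearDl, linearDr, linearZl_LR, linearZr_LR) /=.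
by rewrite symp_ee symp_ff symp_ef symp_fe ij oppr0 !mulr0 !addr0.
Qed.

Section SymplecticallyAdditive.
Hypothesis m_gt1 : (1 < m)%N.
Variable lam : V -> R.
Hypothesis lamZ : forall (a : R) (z : V), lam (a *: z) = a * lam z.
Hypothesis lamD_orth : forall u v : V, symp u v = 0 -> lam (u + v) = lam u + lam v.

(* The pair (e_j, -pq f_j) from a second hyperbolic plane compensates
   [p e_i, q f_i] = -pq; this is where m >= 2 is needed. *)
Lemma lam_hyperbolic_plane i p q :
  lam (p *: ebasis i + q *: fbasis i) = p * lam (ebasis i) + q * lam (fbasis i).
Proof.
have [j ji] := exists_ord_neq i m_gt1.
have /negbTE ij : i != j by rewrite eq_sym.
rewrite (lamD_compensated lamZ lamD_orth (e := ebasis j) (f := - (p * q) *: fbasis j)) ?lamZ //.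
all: rewrite !(linearZl_LR, linearZr_LR) /= ?(symp_ee, symp_ff, symp_ef, symp_fe).
all: rewrite ?ij ?(negbTE ji) ?eqxx /=; ring.
Qed.

Lemma lam_coord z :
  lam z = \sum_i (z (lshift m i) 0 * lam (ebasis i) + z (rshift m i) 0 * lam (fbasis i)).
Proof.
rewrite -{1}(sum_hyperbolic_part z) (lam_sum_orth lamZ lamD_orth); last first.
  by move=> i j; apply: symp_hyperbolic_part.
by apply: eq_bigr => i _; apply: lam_hyperbolic_plane.
Qed.

End SymplecticallyAdditive.

End StandardSymplecticForm.

Theorem lemma1 (m : nat) (hm : (2 <= m)%N) (lam : 'cV[R]_(m + m) -> R)
  (hhom : forall (a : R) (z : 'cV[R]_(m + m)), lam (a *: z) = a * lam z)
  (hadd : forall z1 z2 : 'cV[R]_(m + m), symp z1 z2 = 0 ->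
            lam (z1 + z2) = lam z1 + lam z2) :
  forall (a : R) (x y : 'cV[R]_(m + m)), lam (a *: x + y) = a * lam x + lam y.
Proof.
move=> a x y; rewrite !(lam_coord hm hhom hadd) mulr_sumr -big_split /=.
by apply: eq_bigr => i _; rewrite !mxE; ring.
Qed.
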